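(* Let $0<r_1<r_2<r_3$ and let $f:\mathbb T^2\to\mathbb R$, $f(\alpha,\beta)=C(r_1,r_2,r_3,\alpha,\beta)$. Then $(\alpha,\beta)=(\pi,0)$ is a global minimum point of $f$ (i.e. $c(r_1,r_2,r_3)=f(\pi,0)=\frac1{r_1+r_2}+\frac1{r_2+r_3}+\frac1{r_3-r_1}$) if and only if \[ r_2(r_3-r_1)^3 - r_1(r_3+r_2)^3 - r_3(r_1+r_2)^3 \ \ge\ 0. \] Moreover, if this inequality holds, $(\pi,0)$ is the unique global minimum point of $f$ on $\mathbb T^2$.
   Context: For $r_1,r_2,r_3\ge 0$ and $(\alpha,\beta)\in\mathbb T^2=(\mathbb R/2\pi\mathbb Z)^2$ let \[C(r_1,r_2,r_3,\alpha,\beta)=\frac{1}{\sqrt{r_1^2+r_2^2-2r_1r_2\cos\alpha}}+\frac{1}{\sqrt{r_1^2+r_3^2-2r_1r_3\cos\beta}}+\frac{1}{\sqrt{r_2^2+r_3^2-2r_2r_3\cos(\alpha-\beta)}}\] (value $+\infty$ if a denominator vanishes); this is the Coulomb cost of $v_1=(r_1,0)$, $v_2=r_2(\cos\alpha,\sin\alpha)$, $v_3=r_3(\cos\beta,\sin\beta)$ in $\mathbb R^2$. The radial cost is $c(r_1,r_2,r_3)=\min_{(\alpha,\beta)\in\mathbb T^2}C(r_1,r_2,r_3,\alpha,\beta)$. *)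

From Stdlib Require Import Reals ZArith.
Open Scope R_scope.

(* Coulomb cost of v1 = (r1,0), v2 = r2 (cos a, sin a), v3 = r3 (cos b, sin b).
   Angles are real representatives of points of the torus (R/2piZ)^2; the
   function is 2pi-periodic in each angle.  Real-valued: under the standing
   hypothesis 0 < r1 < r2 < r3 of the theorem no denominator vanishes. *)
Definition Ccost (r1 r2 r3 a b : R) : R :=
  / sqrt (r1 ^ 2 + r2 ^ 2 - 2 * r1 * r2 * cos a)
  + / sqrt (r1 ^ 2 + r3 ^ 2 - 2 * r1 * r3 * cos b)
  + / sqrt (r2 ^ 2 + r3 ^ 2 - 2 * r2 * r3 * cos (a - b)).

Definition angle_eq (x y : R) : Prop := exists k : Z, x = y + 2 * PI * IZR k.

From Stdlib Require Import Reals Lra Psatz.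
From Coquelicot Require Import Coquelicot.
Open Scope R_scope.

(* Write D_ij for the squared distances, so that Ccost = sum 1/sqrt D_ij, and
   let y_ij be the distances at (PI, 0): r1+r2, r2+r3, r3-r1.  Convexity of
   D |-> 1/sqrt D gives 1/sqrt D >= 1/y + (y^2-D)/(2y^3), with equality iff
   D = y^2.  Summing the three tangent bounds yields
     Ccost a b - Ccost PI 0 = (tangent gaps >= 0)
                              + P (1+cos a) + Q (1+cos (a-b)) - M (1-cos b)
   with curvature weights P, Q, M > 0.  A half-angle argument plus weighted
   Cauchy-Schwarz shows the trigonometric part is >= 0 when M(P+Q) <= PQ, and
   M(P+Q) <= PQ is equivalent to the cubic inequality of the theorem.  This
   gives sufficiency and, via the equality cases of the tangent bounds,
   uniqueness.  For necessity, along the curve e |-> (PI + k e, e) with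
   k = Q/(P+Q) the cost has zero first derivative and second derivative
   k^2 P - M + (k-1)^2 Q = (PQ - M(P+Q))/(P+Q) at e = 0, which is negative
   when the cubic inequality fails, so (PI, 0) is not a minimum. *)

Definition sqdist (x y t : R) : R := x ^ 2 + y ^ 2 - 2 * x * y * cos t.

Lemma Ccost_sqdist (r1 r2 r3 a b : R) :
  Ccost r1 r2 r3 a b =
  / sqrt (sqdist r1 r2 a) + / sqrt (sqdist r1 r3 b) + / sqrt (sqdist r2 r3 (a - b)).
Proof. reflexivity. Qed.

Lemma sqdist_pos (x y t : R) : 0 < x -> 0 < y -> x <> y -> 0 < sqdist x y t.
Proof.
  intros Hx Hy Hxy. unfold sqdist. pose proof (COS_bound t).
  assert (0 <= x * y * (1 - cos t)) by (apply Rmult_le_pos; nra).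
  assert (0 < (x - y) ^ 2) by (apply pow2_gt_0; lra).
  nra.
Qed.

Lemma sqdist_opposite (x y t : R) : (x + y) ^ 2 - sqdist x y t = 2 * x * y * (1 + cos t).
Proof. unfold sqdist. ring. Qed.

Lemma sqdist_aligned (x y t : R) : (y - x) ^ 2 - sqdist x y t = - (2 * x * y * (1 - cos t)).
Proof. unfold sqdist. ring. Qed.

Lemma cos_eq_1_angle (x : R) : cos x = 1 -> angle_eq x 0.
Proof.
  intro H. replace x with (2 * (x / 2)) in H by field. rewrite cos_2a_sin in H.
  assert (Hs : sin (x / 2) = 0) by nra.
  destruct (sin_eq_0_0 _ Hs) as [k Hk]. exists k.
  replace x with (2 * (x / 2)) by field. rewrite Hk. ring.
Qed.

Lemma cos_eq_m1_angle (x : R) : cos x = -1 -> angle_eq x PI.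
Proof.
  intro H. assert (Hc : cos (x - PI) = 1).
  { assert (E : cos x = cos ((x - PI) + PI)) by (f_equal; ring).
    rewrite neg_cos in E. lra. }
  destruct (cos_eq_1_angle _ Hc) as [k Hk]. exists k. lra.
Qed.

Lemma sqdist_opposite_eq (x y t : R) :
  0 < x -> 0 < y -> sqdist x y t = (x + y) ^ 2 -> angle_eq t PI.
Proof.
  intros Hx Hy E. apply cos_eq_m1_angle.
  pose proof (sqdist_opposite x y t) as D. rewrite E in D.
  assert (0 < x * y) by nra. nra.
Qed.

Lemma sqdist_aligned_eq (x y t : R) :
  0 < x -> 0 < y -> sqdist x y t = (y - x) ^ 2 -> angle_eq t 0.
Proof.
  intros Hx Hy E. apply cos_eq_1_angle.
  pose proof (sqdist_aligned x y t) as D. rewrite E in D.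
  assert (0 < x * y) by nra. nra.
Qed.

(* Gap between 1/sqrt D and its tangent line in the variable D at D = y^2. *)
Definition tangent_gap (D y : R) : R := / sqrt D - / y - (y ^ 2 - D) / (2 * y ^ 3).

Lemma tangent_gap_factor (D y : R) : 0 < D -> 0 < y ->
  tangent_gap D y = (sqrt D - y) ^ 2 * (sqrt D + 2 * y) / (2 * sqrt D * y ^ 3).
Proof.
  intros HD Hy. unfold tangent_gap.
  assert (Hs : 0 < sqrt D) by (apply sqrt_lt_R0; lra).
  assert (HsD : sqrt D * sqrt D = D) by (apply sqrt_sqrt; lra).
  set (s := sqrt D) in *. rewrite <- HsD.
  field. repeat split; apply Rgt_not_eq; lra.
Qed.

Lemma tangent_gap_nonneg (D y : R) : 0 < D -> 0 < y -> 0 <= tangent_gap D y.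
Proof.
  intros HD Hy. rewrite tangent_gap_factor by assumption.
  assert (Hs : 0 < sqrt D) by (apply sqrt_lt_R0; lra).
  apply Rdiv_le_0_compat.
  - apply Rmult_le_pos; [apply pow2_ge_0 | lra].
  - apply Rmult_lt_0_compat; [lra | apply pow_lt; lra].
Qed.

Lemma tangent_gap_eq0 (D y : R) : 0 < D -> 0 < y -> tangent_gap D y = 0 -> D = y ^ 2.
Proof.
  intros HD Hy H0. rewrite tangent_gap_factor in H0 by assumption.
  assert (Hs : 0 < sqrt D) by (apply sqrt_lt_R0; lra).
  assert (Hden : 0 < 2 * sqrt D * y ^ 3) by (apply Rmult_lt_0_compat; [lra | apply pow_lt; lra]).
  assert (Hnum : (sqrt D - y) ^ 2 * (sqrt D + 2 * y) = 0).
  { rewrite <- (Rmult_0_l (2 * sqrt D * y ^ 3)), <- H0. field. lra. }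
  apply Rmult_integral in Hnum. destruct Hnum as [Hsq | Hlin]; [| lra].
  assert (Hsy : sqrt D - y = 0)
    by (destruct (Req_dec (sqrt D - y) 0) as [E | E];
        [exact E | now apply pow_nonzero with (n := 2%nat) in E]).
  rewrite <- (sqrt_sqrt D) by lra. replace (sqrt D) with y by lra. ring.
Qed.

(* Curvature weights: d^2/dt^2 of 1/sqrt (sqdist x y t) is wsum x y at t = PI
   and - wdiff x y at t = 0 (for 0 < x < y); they also weigh the tangent bounds. *)
Definition wsum (x y : R) : R := x * y / (x + y) ^ 3.
Definition wdiff (x y : R) : R := x * y / (y - x) ^ 3.

Lemma wsum_pos (x y : R) : 0 < x -> 0 < y -> 0 < wsum x y.
Proof. intros. unfold wsum. apply Rdiv_lt_0_compat; [nra | apply pow_lt; lra]. Qed.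

Lemma wdiff_pos (x y : R) : 0 < x -> x < y -> 0 < wdiff x y.
Proof. intros. unfold wdiff. apply Rdiv_lt_0_compat; [nra | apply pow_lt; lra]. Qed.

Definition disc (r1 r2 r3 : R) : R :=
  r2 * (r3 - r1) ^ 3 - r1 * (r3 + r2) ^ 3 - r3 * (r1 + r2) ^ 3.

Lemma weights_disc (r1 r2 r3 : R) : 0 < r1 -> r1 < r2 -> r2 < r3 ->
  wsum r1 r2 * wsum r2 r3 - wdiff r1 r3 * (wsum r1 r2 + wsum r2 r3)
  = disc r1 r2 r3 * (r1 * r2 * r3 / ((r1 + r2) ^ 3 * (r2 + r3) ^ 3 * (r3 - r1) ^ 3)).
Proof.
  intros. unfold wsum, wdiff, disc. field. repeat split; try apply pow_nonzero; lra.
Qed.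

Lemma weights_le_iff_disc (r1 r2 r3 : R) : 0 < r1 -> r1 < r2 -> r2 < r3 ->
  wdiff r1 r3 * (wsum r1 r2 + wsum r2 r3) <= wsum r1 r2 * wsum r2 r3 <-> 0 <= disc r1 r2 r3.
Proof.
  intros h1 h12 h23. pose proof (weights_disc r1 r2 r3 h1 h12 h23) as E.
  set (c := r1 * r2 * r3 / ((r1 + r2) ^ 3 * (r2 + r3) ^ 3 * (r3 - r1) ^ 3)) in E.
  assert (Hc : 0 < c).
  { apply Rdiv_lt_0_compat; [repeat apply Rmult_lt_0_compat; lra |].
    repeat apply Rmult_lt_0_compat; lra. }
  split; intro H.
  - apply (Rmult_le_reg_r c); [exact Hc | lra].
  - assert (0 <= disc r1 r2 r3 * c) by (apply Rmult_le_pos; lra). lra.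
Qed.

(* With u = a/2, v = (a-b)/2 the
   sides are 2P cos^2 u + 2Q cos^2 v and 2M sin^2 (u-v), and
   sin^2 (u-v) <= (|cos u| + |cos v|)^2 <= (P cos^2 u + Q cos^2 v) (P+Q)/(PQ). *)
Lemma half_angle_bound (P Q M a b : R) : 0 < P -> 0 < Q -> 0 < M -> M * (P + Q) <= P * Q ->
  0 <= P * (1 + cos a) + Q * (1 + cos (a - b)) - M * (1 - cos b).
Proof.
  intros HP HQ HM HPQ.
  set (u := a / 2). set (v := (a - b) / 2).
  replace a with (2 * u) by (unfold u; field).
  replace (2 * u - b) with (2 * v) by (unfold u, v; field).
  replace b with (2 * (u - v)) by (unfold u, v; field).
  rewrite (cos_2a_cos u), (cos_2a_cos v), (cos_2a_sin (u - v)), sin_minus.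
  pose proof (sin2_cos2 u) as Su. pose proof (sin2_cos2 v) as Sv. unfold Rsqr in *.
  set (su := sin u) in *. set (cu := cos u) in *. set (sv := sin v) in *. set (cv := cos v) in *.
  assert (Hsin : (su * cv - cu * sv) ^ 2 <= (Rabs cv + Rabs cu) ^ 2).
  { assert (Habs : Rabs (su * cv - cu * sv) <= Rabs cv + Rabs cu).
    { eapply Rle_trans; [apply Rabs_triang |].
      rewrite Rabs_Ropp, !Rabs_mult.
      assert (Rabs su <= 1) by (apply Rabs_le; nra).
      assert (Rabs sv <= 1) by (apply Rabs_le; nra).
      pose proof (Rabs_pos cv). pose proof (Rabs_pos cu). nra. }
    rewrite <- (pow2_abs (su * cv - cu * sv)).
    pose proof (Rabs_pos (su * cv - cu * sv)). nra. }
  assert (Hcs : M * (Rabs cv + Rabs cu) ^ 2 <= P * cu ^ 2 + Q * cv ^ 2).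
  { rewrite <- (pow2_abs cu), <- (pow2_abs cv).
    set (p := Rabs cu). set (q := Rabs cv).
    assert (E : (P * p ^ 2 + Q * q ^ 2) * (P + Q) - P * Q * (q + p) ^ 2 = (P * p - Q * q) ^ 2)
      by ring.
    assert (M * (q + p) ^ 2 * (P + Q) <= P * Q * (q + p) ^ 2)
      by (replace (M * (q + p) ^ 2 * (P + Q)) with (M * (P + Q) * (q + p) ^ 2) by ring;
          apply Rmult_le_compat_r; [apply pow2_ge_0 | exact HPQ]).
    pose proof (pow2_ge_0 (P * p - Q * q)).
    apply (Rmult_le_reg_r (P + Q)); lra. }
  nra.
Qed.

Lemma cost_at_PI_0 (r1 r2 r3 : R) : 0 < r1 -> r1 < r2 -> r2 < r3 ->
  Ccost r1 r2 r3 PI 0 = / (r1 + r2) + / (r2 + r3) + / (r3 - r1).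
Proof.
  intros. unfold Ccost. rewrite Rminus_0_r, cos_PI, cos_0.
  replace (r1 ^ 2 + r2 ^ 2 - 2 * r1 * r2 * -1) with ((r1 + r2) ^ 2) by ring.
  replace (r1 ^ 2 + r3 ^ 2 - 2 * r1 * r3 * 1) with ((r3 - r1) ^ 2) by ring.
  replace (r2 ^ 2 + r3 ^ 2 - 2 * r2 * r3 * -1) with ((r2 + r3) ^ 2) by ring.
  rewrite !sqrt_pow2 by lra. ring.
Qed.

Lemma cost_excess (r1 r2 r3 a b : R) : 0 < r1 -> r1 < r2 -> r2 < r3 ->
  Ccost r1 r2 r3 a b - Ccost r1 r2 r3 PI 0
  = tangent_gap (sqdist r1 r2 a) (r1 + r2) + tangent_gap (sqdist r1 r3 b) (r3 - r1)
    + tangent_gap (sqdist r2 r3 (a - b)) (r2 + r3)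
    + (wsum r1 r2 * (1 + cos a) + wsum r2 r3 * (1 + cos (a - b))
       - wdiff r1 r3 * (1 - cos b)).
Proof.
  intros. rewrite cost_at_PI_0, Ccost_sqdist by assumption. unfold tangent_gap.
  set (i12 := / sqrt (sqdist r1 r2 a)). set (i13 := / sqrt (sqdist r1 r3 b)).
  set (i23 := / sqrt (sqdist r2 r3 (a - b))).
  unfold wsum, wdiff, sqdist. field. lra.
Qed.

Lemma cost_gaps_nonneg (r1 r2 r3 a b : R) : 0 < r1 -> r1 < r2 -> r2 < r3 ->
  0 <= tangent_gap (sqdist r1 r2 a) (r1 + r2) /\ 0 <= tangent_gap (sqdist r1 r3 b) (r3 - r1)
  /\ 0 <= tangent_gap (sqdist r2 r3 (a - b)) (r2 + r3).
Proof.
  intros. repeat split; apply tangent_gap_nonneg; try apply sqdist_pos; lra.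
Qed.

Lemma trig_part_nonneg (r1 r2 r3 a b : R) : 0 < r1 -> r1 < r2 -> r2 < r3 ->
  0 <= disc r1 r2 r3 ->
  0 <= wsum r1 r2 * (1 + cos a) + wsum r2 r3 * (1 + cos (a - b)) - wdiff r1 r3 * (1 - cos b).
Proof.
  intros h1 h12 h23 Hd. apply half_angle_bound.
  - apply wsum_pos; lra.
  - apply wsum_pos; lra.
  - apply wdiff_pos; lra.
  - apply weights_le_iff_disc; assumption.
Qed.

Lemma min_at_PI_0 (r1 r2 r3 : R) : 0 < r1 -> r1 < r2 -> r2 < r3 -> 0 <= disc r1 r2 r3 ->
  forall a b, Ccost r1 r2 r3 PI 0 <= Ccost r1 r2 r3 a b.
Proof.
  intros h1 h12 h23 Hd a b.
  pose proof (cost_excess r1 r2 r3 a b h1 h12 h23).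
  pose proof (cost_gaps_nonneg r1 r2 r3 a b h1 h12 h23).
  pose proof (trig_part_nonneg r1 r2 r3 a b h1 h12 h23 Hd).
  lra.
Qed.

(* Equality forces the two tangent gaps involving v1 to vanish, hence the
   distances |v1 v2| and |v1 v3| to be r1+r2 and r3-r1. *)
Lemma min_unique (r1 r2 r3 : R) : 0 < r1 -> r1 < r2 -> r2 < r3 -> 0 <= disc r1 r2 r3 ->
  forall a b, Ccost r1 r2 r3 a b <= Ccost r1 r2 r3 PI 0 -> angle_eq a PI /\ angle_eq b 0.
Proof.
  intros h1 h12 h23 Hd a b Hle.
  pose proof (cost_excess r1 r2 r3 a b h1 h12 h23).
  pose proof (cost_gaps_nonneg r1 r2 r3 a b h1 h12 h23).
  pose proof (trig_part_nonneg r1 r2 r3 a b h1 h12 h23 Hd).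
  split.
  - apply (sqdist_opposite_eq r1 r2); [lra | lra |].
    apply tangent_gap_eq0; [apply sqdist_pos | |]; lra.
  - apply (sqdist_aligned_eq r1 r3); [lra | lra |].
    apply tangent_gap_eq0; [apply sqdist_pos | |]; lra.
Qed.

Definition inv_dist (A B t : R) : R := / sqrt (A - B * cos t).
Definition d_inv_dist (A B t : R) : R :=
  - (B * sin t) / (2 * (A - B * cos t) * sqrt (A - B * cos t)).

Lemma inv_dist_derive (A B t : R) : 0 < A - B * cos t ->
  is_derive (inv_dist A B) t (d_inv_dist A B t).
Proof.
  intros H. unfold inv_dist, d_inv_dist.
  assert (HS : 0 < sqrt (A - B * cos t)) by (apply sqrt_lt_R0; lra).
  assert (HSS : sqrt (A - B * cos t) * sqrt (A - B * cos t) = A - B * cos t)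
    by (apply sqrt_sqrt; lra).
  auto_derive; replace (A + - (B * cos t)) with (A - B * cos t) by ring.
  - repeat split; lra.
  - rewrite HSS. field. lra.
Qed.

Lemma d_inv_dist_derive (A B t : R) : 0 < A - B * cos t -> sin t = 0 ->
  is_derive (d_inv_dist A B) t (- (B * cos t) / (2 * (A - B * cos t) * sqrt (A - B * cos t))).
Proof.
  intros H Hs. unfold d_inv_dist.
  assert (HS : 0 < sqrt (A - B * cos t)) by (apply sqrt_lt_R0; lra).
  auto_derive; replace (A + - (B * cos t)) with (A - B * cos t) by ring.
  - repeat split; try lra. apply Rgt_not_eq. apply Rmult_lt_0_compat; lra.
  - rewrite Hs. field. lra.
Qed.

Lemma inv_dist_curv_PI (x y : R) : 0 < x -> 0 < y ->
  - (2 * x * y * cos PI) / (2 * (x ^ 2 + y ^ 2 - 2 * x * y * cos PI)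
                            * sqrt (x ^ 2 + y ^ 2 - 2 * x * y * cos PI)) = wsum x y.
Proof.
  intros. rewrite cos_PI.
  replace (x ^ 2 + y ^ 2 - 2 * x * y * -1) with ((x + y) ^ 2) by ring.
  rewrite sqrt_pow2 by lra. unfold wsum. field. lra.
Qed.

Lemma inv_dist_curv_0 (x y : R) : 0 < x -> x < y ->
  - (2 * x * y * cos 0) / (2 * (x ^ 2 + y ^ 2 - 2 * x * y * cos 0)
                           * sqrt (x ^ 2 + y ^ 2 - 2 * x * y * cos 0)) = - wdiff x y.
Proof.
  intros. rewrite cos_0.
  replace (x ^ 2 + y ^ 2 - 2 * x * y * 1) with ((y - x) ^ 2) by ring.
  rewrite sqrt_pow2 by lra. unfold wdiff. field. lra.
Qed.

Lemma is_derive_affine_comp (F : R -> R) (dF k c x : R) : is_derive F (c + k * x) dF ->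
  is_derive (fun e => F (c + k * e)) x (k * dF).
Proof.
  intro H. assert (Hg : is_derive (fun e => c + k * e) x k) by (auto_derive; [auto | ring]).
  exact (is_derive_comp F (fun e => c + k * e) x dF k H Hg).
Qed.

Lemma is_derive_sum3 (f g h : R -> R) (x a b c : R) :
  is_derive f x a -> is_derive g x b -> is_derive h x c ->
  is_derive (fun y => f y + g y + h y) x (a + b + c).
Proof.
  intros Ha Hb Hc. exact (is_derive_plus _ _ x _ _ (is_derive_plus _ _ x _ _ Ha Hb) Hc).
Qed.

Lemma not_min_of_neg_second_derivative (h dh : R -> R) (L : R) :
  (forall x, is_derive h x (dh x)) -> dh 0 = 0 -> is_derive dh 0 L -> L < 0 ->
  exists e, h e < h 0.
Proof.
  intros Hd H0 HL HLn. apply is_derive_Reals in HL.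
  destruct (HL (- L) ltac:(lra)) as [d Hdl].
  pose proof (cond_pos d) as dpos.
  assert (Hneg : forall c, 0 < c < d -> dh c < 0).
  { intros c Hc.
    specialize (Hdl c ltac:(lra) ltac:(rewrite Rabs_pos_eq; lra)).
    rewrite Rplus_0_l, H0, Rminus_0_r in Hdl.
    apply Rabs_def2 in Hdl. destruct Hdl as [Hu _].
    destruct (Rlt_or_le (dh c) 0) as [Hlt | Hge]; [exact Hlt |].
    assert (0 <= dh c / c) by (apply Rdiv_le_0_compat; lra). lra. }
  destruct (MVT_cor2 h dh 0 (d / 2) ltac:(lra)) as [c [Hc1 Hc2]].
  { intros c _. apply is_derive_Reals. apply Hd. }
  exists (d / 2). assert (dh c < 0) by (apply Hneg; lra).
  assert (dh c * (d / 2 - 0) < 0) by nra. lra.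
Qed.

Lemma curve_cost_derivatives (r1 r2 r3 k : R) : 0 < r1 -> r1 < r2 -> r2 < r3 ->
  exists dh : R -> R, (forall x, is_derive (fun e => Ccost r1 r2 r3 (PI + k * e) e) x (dh x))
    /\ dh 0 = 0
    /\ is_derive dh 0 (k * (k * wsum r1 r2) + 1 * (1 * - wdiff r1 r3)
                       + (k - 1) * ((k - 1) * wsum r2 r3)).
Proof.
  intros h1 h12 h23.
  exists (fun e => k * d_inv_dist (r1 ^ 2 + r2 ^ 2) (2 * r1 * r2) (PI + k * e)
            + 1 * d_inv_dist (r1 ^ 2 + r3 ^ 2) (2 * r1 * r3) (0 + 1 * e)
            + (k - 1) * d_inv_dist (r2 ^ 2 + r3 ^ 2) (2 * r2 * r3) (PI + (k - 1) * e)).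
  assert (Hcurve : forall e, Ccost r1 r2 r3 (PI + k * e) e =
            inv_dist (r1 ^ 2 + r2 ^ 2) (2 * r1 * r2) (PI + k * e)
            + inv_dist (r1 ^ 2 + r3 ^ 2) (2 * r1 * r3) (0 + 1 * e)
            + inv_dist (r2 ^ 2 + r3 ^ 2) (2 * r2 * r3) (PI + (k - 1) * e)).
  { intro e. unfold Ccost, inv_dist.
    replace (PI + k * e - e) with (PI + (k - 1) * e) by ring.
    replace (0 + 1 * e) with e by ring. reflexivity. }
  assert (Hpos : forall x y t, 0 < x -> x < y -> 0 < x ^ 2 + y ^ 2 - 2 * x * y * cos t)
    by (intros; apply (sqdist_pos x y t); lra).
  split; [| split].
  - intro x. eapply is_derive_ext; [intro e; symmetry; apply Hcurve |].
    apply is_derive_sum3; apply is_derive_affine_comp; apply inv_dist_derive; apply Hpos; lra.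
  - cbv beta. unfold d_inv_dist. rewrite !Rmult_0_r, !Rplus_0_r, sin_PI, sin_0. unfold Rdiv. ring.
  - rewrite <- (inv_dist_curv_PI r1 r2), <- (inv_dist_curv_0 r1 r3),
      <- (inv_dist_curv_PI r2 r3) by lra.
    apply is_derive_sum3; apply is_derive_scal; apply is_derive_affine_comp;
      rewrite ?Rmult_0_r, ?Rplus_0_r; apply d_inv_dist_derive;
      first [apply Hpos; lra | apply sin_PI | apply sin_0].
Qed.

Lemma min_at_PI_0_disc (r1 r2 r3 : R) : 0 < r1 -> r1 < r2 -> r2 < r3 ->
  (forall a b, Ccost r1 r2 r3 PI 0 <= Ccost r1 r2 r3 a b) -> 0 <= disc r1 r2 r3.
Proof.
  intros h1 h12 h23 Hmin.
  apply (weights_le_iff_disc r1 r2 r3 h1 h12 h23).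
  set (P := wsum r1 r2). set (Q := wsum r2 r3). set (M := wdiff r1 r3).
  assert (HP : 0 < P) by (apply wsum_pos; lra).
  assert (HQ : 0 < Q) by (apply wsum_pos; lra).
  destruct (Rle_or_lt (M * (P + Q)) (P * Q)) as [Hle | Hlt]; [exact Hle | exfalso].
  set (k := Q / (P + Q)).
  destruct (curve_cost_derivatives r1 r2 r3 k h1 h12 h23) as (dh & Hd & H0 & HL).
  assert (Hform : (k * (k * P) + 1 * (1 * - M) + (k - 1) * ((k - 1) * Q)) * (P + Q)
                  = P * Q - M * (P + Q)) by (unfold k; field; lra).
  assert (HLn : k * (k * P) + 1 * (1 * - M) + (k - 1) * ((k - 1) * Q) < 0).
  { apply (Rmult_lt_reg_r (P + Q)); lra. }
  destruct (not_min_of_neg_second_derivative _ _ _ Hd H0 HL HLn) as [e He].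
  specialize (Hmin (PI + k * e) e).
  replace (PI + k * 0) with PI in He by ring. lra.
Qed.

Theorem theorem1p3 (r1 r2 r3 : R) (h1 : 0 < r1) (h12 : r1 < r2) (h23 : r2 < r3) :
  Ccost r1 r2 r3 PI 0 = / (r1 + r2) + / (r2 + r3) + / (r3 - r1) /\
  ((forall a b : R, Ccost r1 r2 r3 PI 0 <= Ccost r1 r2 r3 a b) <->
     0 <= r2 * (r3 - r1) ^ 3 - r1 * (r3 + r2) ^ 3 - r3 * (r1 + r2) ^ 3) /\
  (0 <= r2 * (r3 - r1) ^ 3 - r1 * (r3 + r2) ^ 3 - r3 * (r1 + r2) ^ 3 ->
     forall a b : R, Ccost r1 r2 r3 a b <= Ccost r1 r2 r3 PI 0 ->
       angle_eq a PI /\ angle_eq b 0).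
Proof.
  split; [| split; [split |]].
  - exact (cost_at_PI_0 r1 r2 r3 h1 h12 h23).
  - exact (min_at_PI_0_disc r1 r2 r3 h1 h12 h23).
  - exact (min_at_PI_0 r1 r2 r3 h1 h12 h23).
  - exact (min_unique r1 r2 r3 h1 h12 h23).
Qed.
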